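(* Let $x\in X$ and let $\mathcal{Q}=\{P_\alpha(x),P_\beta(y)\}$ be a plaque chain of length $1$, so that $h_{\mathcal{Q}}(x)=y$. Then for all $n>0$, $$\mu_{n-1}(x)\le \mu_n(y)\cdot h_{\mathcal{Q}}'(x)\le\mu_{n+1}(x).$$
   Context: $M$ is a closed Riemannian manifold with a codimension-one $C^1$-foliation $\mathcal{F}$ with oriented normal bundle. Fix a finite regular foliation atlas of transversally orientation-preserving charts $\varphi_\alpha\colon U_\alpha\to(-1,1)^n\times(-1,1)$ with transverse coordinate spaces $X_\alpha=(-1,1)$, and $X$ their disjoint union; $P_\alpha(x)$ is the plaque of $U_\alpha$ with transverse coordinate $x$. The transition map $h_{\beta\alpha}$ sends $x$ to $y$ when $P_\alpha(x)\cap P_\beta(y)\neq\emptyset$. A plaque chain $\mathcal{P}$ of length $\|\mathcal{P}\|=k$ is a sequence $P_{\alpha_0}(x_0),\dots,P_{\alpha_k}(x_k)$ of plaques with consecutive ones intersecting; its holonomy $h_{\mathcal{P}}=h_{\alpha_k\alpha_{k-1}}\circ\cdots\circ h_{\alpha_1\alpha_0}$ has maximal connected open domain $D_{\mathcal{P}}\ni x_0$ where all partial compositions are defined; derivatives are positive. Define $\mu_0(x)=1$ and, for $n\ge1$, $\mu_n(x)=\sup\{h_{\mathcal{P}}'(x): x\in D_{\mathcal{P}},\ \|\mathcal{P}\|\le n\}$. *)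

From HB Require Import structures.
From mathcomp Require Import all_boot all_order all_algebra.
From mathcomp Require Import all_classical all_reals all_analysis.
Set Implicit Arguments. Unset Strict Implicit. Unset Printing Implicit Defensive.
Import Order.TTheory GRing.Theory Num.Theory.
Import numFieldNormedType.Exports.
Local Open Scope classical_set_scope.
Local Open Scope ring_scope.

(* Transverse data of a finite regular foliation atlas of a codimension-one
   C^1 foliation with transversally orientation-preserving charts.
   Charts are indexed by the finite type A; X_a = (-1,1).
   [hdom b a] is the set of x in X_a such that the plaque P_a(x) meets some
   plaque P_b(y) (regularity: y is then unique); [htr b a x] is that y,
   i.e. htr b a is the transition map h_{ba}. *)
Record holonomy_atlas (R : realType) (A : finType) := HolonomyAtlas {
  hdom : A -> A -> set R;
  htr  : A -> A -> R -> R;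
  hdom_sub  : forall a b, hdom b a `<=` [set x | -1 < x < 1];
  hdom_open : forall a b, open (hdom b a);
  hdom_self : forall a, hdom a a = [set x | -1 < x < 1];
  htr_self  : forall a x, hdom a a x -> htr a a x = x;
  htr_maps  : forall a b x, hdom b a x -> hdom a b (htr b a x);
  (* plaque intersection is symmetric: h_{ab} is the inverse of h_{ba} *)
  htr_inv   : forall a b x, hdom b a x -> htr a b (htr b a x) = x;
  htr_derivable : forall a b x, hdom b a x -> derivable (htr b a) x 1;
  htr_C1 : forall a b x, hdom b a x -> {for x, continuous (fun t => derive1 (htr b a) t)};
  htr_pos : forall a b x, hdom b a x -> 0 < derive1 (htr b a) x
}.

Section Chains.
Variables (R : realType) (A : finType) (F : holonomy_atlas R A).

(* A plaque chain P_{a0}(x0), P_{a1}(x1), ..., P_{ak}(xk) is encoded by its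
   first chart a0, the remaining charts s = [:: a1; ...; ak] and x0; the
   x_i are then determined by x_{i+1} = h_{a_{i+1} a_i}(x_i).
   [chain_def a s x] : all partial compositions are defined at x. *)
Fixpoint chain_def (a : A) (s : seq A) (x : R) : Prop :=
  match s with
  | [::] => -1 < x < 1
  | b :: s' => hdom F b a x /\ chain_def b s' (htr F b a x)
  end.

Fixpoint chain_hol (a : A) (s : seq A) (x : R) : R :=
  match s with
  | [::] => x
  | b :: s' => chain_hol b s' (htr F b a x)
  end.

Definition chain_dom (a : A) (s : seq A) (x0 : R) : set R :=
  connected_component (chain_def a s) x0.

Definition mu (n : nat) (a : A) (x : R) : \bar R :=
  if n is 0 then 1%E else
  ereal_sup [set (derive1 (chain_hol a s) x)%:E | s in
     [set s : seq A | exists x0, chain_def a s x0 /\ chain_dom a s x0 x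
                                 /\ (size s <= n)%N]].

End Chains.

From HB Require Import structures.
From mathcomp Require Import all_boot all_order all_algebra.
From mathcomp Require Import all_classical all_reals all_analysis.
Import Order.TTheory GRing.Theory Num.Theory.
Import numFieldNormedType.Exports.
Local Open Scope classical_set_scope.
Local Open Scope ring_scope.

(* Let y = h_{ba}(x).  By the chain rule, prepending P_b(y) to a chain at x
   multiplies its holonomy derivative by h_{ab}'(y), and prepending P_a(x) to
   a chain at y multiplies it by h_{ba}'(x); these factors are reciprocal
   because h_{ab} inverts h_{ba}.  So chains of length <= n-1 at x give chains
   of length <= n at y, and those give chains of length <= n+1 at x, with
   derivatives related by the factor h_Q'(x) = h_{ba}'(x). *)

Section Holonomy.
Set Implicit Arguments. Unset Strict Implicit.
Variables (R : realType) (A : finType) (F : holonomy_atlas R A).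

Lemma derive1_chain_hol_nil a x : derive1 (chain_hol F a [::]) x = 1.
Proof. by rewrite derive1E derive_id. Qed.

Lemma chain_hol_derivable a s x :
  chain_def F a s x -> derivable (chain_hol F a s) x 1.
Proof.
elim: s a x => [|b s IHs] a x /=; first by move=> _; exact: derivable_id.
move=> [hx hs]; change (derivable (chain_hol F b s \o htr F b a) x 1).
apply/derivable1_diffP/differentiable_comp.
- exact/derivable1_diffP/(htr_derivable hx).
- exact/derivable1_diffP/IHs.
Qed.

Lemma derive1_chain_hol_cons a b s x :
  hdom F b a x -> chain_def F b s (htr F b a x) ->
  derive1 (chain_hol F a (b :: s)) x =
  derive1 (chain_hol F b s) (htr F b a x) * derive1 (htr F b a) x.
Proof.
move=> hx hs; change (derive1 (chain_hol F b s \o htr F b a) x =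
  derive1 (chain_hol F b s) (htr F b a x) * derive1 (htr F b a) x).
apply: derive1_comp; [exact: htr_derivable | exact: chain_hol_derivable].
Qed.

Lemma derive1_htr_inv a b x : hdom F b a x ->
  derive1 (htr F a b) (htr F b a x) * derive1 (htr F b a) x = 1.
Proof.
move=> hx; rewrite -derive1_comp; last 2 first.
- exact: htr_derivable.
- exact/htr_derivable/htr_maps.
have near_dom : \forall t \near x, hdom F b a t.
  by apply: open_nbhs_nbhs; split => //; exact: hdom_open.
rewrite derive1E (@near_eq_derive _ _ _ _ id) ?derive_id //.
by near=> t; rewrite /= htr_inv //; near: t.
Unshelve. all: by end_near.
Qed.

Lemma chain_def_cons_htr a b s x : hdom F b a x -> chain_def F a s x ->
  chain_def F b (a :: s) (htr F b a x).
Proof. by move=> hx hs; split; [exact: htr_maps | rewrite htr_inv]. Qed.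

Lemma chain_deriv_le_mu n a s x : chain_def F a s x -> (size s <= n)%N ->
  ((derive1 (chain_hol F a s) x)%:E <= mu F n a x)%E.
Proof.
case: n => [|n] hs hsz /=.
  by move: hsz; rewrite leqn0 => /nilP ->; rewrite derive1_chain_hol_nil.
apply: ereal_sup_ubound; exists s => //; exists x.
by split=> //; split=> //; exact: connected_component_refl.
Qed.

(* The hypothesis [-1 < x < 1] is only needed for n = 0, where mu is the
   derivative of the empty chain at x. *)
Lemma mu_le n a x M : -1 < x < 1 ->
  (forall s, chain_def F a s x -> (size s <= n)%N ->
     ((derive1 (chain_hol F a s) x)%:E <= M)%E) ->
  (mu F n a x <= M)%E.
Proof.
case: n => [|n] hxI bound /=.
  by have := bound [::] hxI (leqnn 0); rewrite derive1_chain_hol_nil.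
apply: ge_ereal_sup => _ [s [x0 [_ [hx0 hsz]]] <-].
exact: bound (connected_component_sub hx0) hsz.
Qed.

Lemma mu_le_mu_cons_htr n a b x : hdom F b a x ->
  (mu F n a x <= mu F n.+1 b (htr F b a x) * (derive1 (htr F b a) x)%:E)%E.
Proof.
move=> hx; apply: mu_le (hdom_sub hx) _ => s hs hsz.
have hy := chain_def_cons_htr hx hs.
have := chain_deriv_le_mu (n := n.+1) hy hsz.
rewrite derive1_chain_hol_cons ?htr_inv //; last exact: htr_maps.
move=> le_cons; rewrite -[derive1 _ x]mulr1 -(derive1_htr_inv hx) mulrA EFinM.
by rewrite lee_pmul2r ?lte_fin //; exact: htr_pos.
Qed.

Lemma mu_htr_le_mu_cons n a b x : hdom F b a x ->
  (mu F n b (htr F b a x) * (derive1 (htr F b a) x)%:E <= mu F n.+1 a x)%E.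
Proof.
move=> hx; have hpos := htr_pos hx.
rewrite -lee_pdivlMr //; apply: mu_le (hdom_sub (htr_maps hx)) _ => s hs hsz.
rewrite lee_pdivlMr // -EFinM -derive1_chain_hol_cons //.
exact: (chain_deriv_le_mu (s := b :: s)).
Qed.

End Holonomy.

Theorem lemma4p1 (R : realType) (A : finType) (F : holonomy_atlas R A)
  (a b : A) (x : R) :
  chain_def F a [:: b] x ->
  forall n : nat, (0 < n)%N ->
    (mu F n.-1 a x <= mu F n b (chain_hol F a [:: b] x)
                       * (derive1 (chain_hol F a [:: b]) x)%:E
     <= mu F n.+1 a x)%E.
Proof.
move=> [hx _] [//|n] _.
have -> : chain_hol F a [:: b] x = htr F b a x by [].
have -> : derive1 (chain_hol F a [:: b]) x = derive1 (htr F b a) x by [].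
apply/andP; split.
- exact: mu_le_mu_cons_htr.
- exact: mu_htr_le_mu_cons.
Qed.
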